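(* Let $R$ be a (not necessarily commutative) local ring with maximal ideal $\mathfrak{m}$, separated and complete for the $\mathfrak{m}$-adic topology, $\sigma:R\to R$ a ring automorphism with $\sigma(\mathfrak{m})=\mathfrak{m}$, and $\delta$ a $\sigma$-derivation with $\delta(R)\subseteq\mathfrak{m}$, $\delta(\mathfrak{m})\subseteq\mathfrak{m}^2$. Let $A=R[[X;\sigma,\delta]]$ and let $f\in A$ have finite reduced order. Then $f$ can be expressed uniquely as $f=\epsilon F$ with $\epsilon$ a unit of $A$ and $F$ a distinguished polynomial.
   Context: A $\sigma$-derivation is an additive map with $\delta(rs)=\delta(r)s+\sigma(r)\delta(s)$. $R[[X;\sigma,\delta]]$ consists of formal series $\sum r_nX^n$ with multiplication determined by $Xr=\sigma(r)X+\delta(r)$; it contains the skew polynomial ring $R[X;\sigma,\delta]$. For $f=\sum a_iX^i$, $\mathrm{ord}^{red}(f)=\min\{i:a_i\in R^\times\}$. A distinguished (Weierstrass) polynomial is a monic polynomial $X^s+a_{s-1}X^{s-1}+\dots+a_1X+a_0\in R[X;\sigma,\delta]$ with all $a_i\in\mathfrak{m}$. *)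

From HB Require Import structures.
From mathcomp Require Import all_boot all_order all_algebra.
Set Implicit Arguments. Unset Strict Implicit. Unset Printing Implicit Defensive.
Import Order.TTheory GRing.Theory.
Local Open Scope ring_scope.

Section SkewSeries.
Variable R : unitRingType.

(* The maximal ideal of a local ring: the set of (two-sided) non-units. *)
Definition in_m (x : R) : Prop := x \notin GRing.unit.

Definition local_ring : Prop :=
  in_m 0 /\
  (forall x y, in_m x -> in_m y -> in_m (x + y)) /\
  (forall x, in_m x -> in_m (- x)) /\
  (forall r x, in_m x -> in_m (r * x) /\ in_m (x * r)).

Inductive mpow : nat -> R -> Prop :=
| mpow0 x : mpow 0 x
| mpow_zero n : mpow n.+1 0
| mpow_mul n a b : in_m a -> mpow n b -> mpow n.+1 (a * b)
| mpow_add n x y : mpow n.+1 x -> mpow n.+1 y -> mpow n.+1 (x + y).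

Definition madic_lim (u : nat -> R) (l : R) : Prop :=
  forall k, exists N, forall i, (N <= i)%N -> mpow k (u i - l).

Definition madic_separated : Prop :=
  forall x, (forall n, mpow n x) -> x = 0.

Definition madic_complete : Prop :=
  forall u : nat -> R,
    (forall k, exists N, forall i j, (N <= i)%N -> (N <= j)%N -> mpow k (u i - u j)) ->
    exists l, madic_lim u l.

Definition sigma_derivation (s d : R -> R) : Prop :=
  (forall x y, d (x + y) = d x + d y) /\
  (forall r x, d (r * x) = d r * x + s r * d x).

(* Coefficients of X^i b = \sum_k xc i k b X^k, using X r = s(r) X + d(r). *)
Fixpoint xc (s d : R -> R) (i k : nat) (b : R) : R :=
  match i with
  | 0 => if k == 0%N then b else 0
  | i'.+1 => (if k is k'.+1 then s (xc s d i' k' b) else 0) + d (xc s d i' k b)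
  end.

Definition series := nat -> R.

Definition one_series : series := fun n => if n == 0%N then 1 else 0.

Definition mul_partial (s d : R -> R) (f g : series) (n N : nat) : R :=
  \sum_(i < N) \sum_(j < n.+1) f i * xc s d i (n - j) (g j).

Definition series_mul_eq (s d : R -> R) (f g h : series) : Prop :=
  forall n, madic_lim (mul_partial s d f g n) (h n).

Definition series_unit (s d : R -> R) (e : series) : Prop :=
  exists e', series_mul_eq s d e e' one_series /\ series_mul_eq s d e' e one_series.

Definition finite_red_ord (f : series) : Prop :=
  exists i, f i \in GRing.unit.

Definition distinguished (F : series) : Prop :=
  exists s : nat, F s = 1 /\ (forall i, (i < s)%N -> in_m (F i)) /\
                  (forall i, (s < i)%N -> F i = 0).

End SkewSeries.

(* A term [f_i X^i g] of a product has its [n]-th coefficient in [m^(i - n)], because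
   [delta] raises the m-adic valuation; hence products of skew power series converge
   coefficientwise, and the ring identities, associativity included, pass to the limit.
   If [s] is the reduced order of [f], then [f = U + V X^s] with [V] a unit and [U] having
   coefficients in [m], so [f = V (X^s + h)] with [h] in [m[[X]]].  A unit [w] such that
   [w (X^s + h)] is distinguished of degree [s] is the fixed point of a contraction, and
   exists by completeness; then [f = (V w^-1) (w (X^s + h))].  For uniqueness, if [u F = F']
   with [u] a unit and [F], [F'] distinguished, comparing coefficients gives [deg F = deg F']
   and puts [u - 1] in every [m^k], so [u = 1] by separatedness. *)

From mathcomp Require Import all_boot all_algebra.
From mathcomp Require Import zify.
From Stdlib Require Import ClassicalEpsilon FunctionalExtensionality.
Set Implicit Arguments. Unset Strict Implicit. Unset Printing Implicit Defensive.
Import GRing.Theory.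
Local Open Scope ring_scope.

Section Weierstrass.
Variable R : unitRingType.
Hypothesis Hloc : local_ring R.
Hypothesis Hsep : madic_separated R.
Hypothesis Hcomp : madic_complete R.

Lemma m0 : in_m (0 : R). Proof. by case: Hloc. Qed.

Lemma mD (x y : R) : in_m x -> in_m y -> in_m (x + y).
Proof. by case: Hloc => _ [+ _]; apply. Qed.

Lemma mN (x : R) : in_m x -> in_m (- x).
Proof. by case: Hloc => _ [_ [+ _]]; apply. Qed.

Lemma mMl (r x : R) : in_m x -> in_m (r * x).
Proof. by case: Hloc => _ [_ [_ H]] /(H r) []. Qed.

Lemma mMr (r x : R) : in_m x -> in_m (x * r).
Proof. by case: Hloc => _ [_ [_ H]] /(H r) []. Qed.

Lemma unitr_nm (x : R) : ~ in_m x -> x \is a GRing.unit.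
Proof. by move=> H; apply/negPn/negP. Qed.

Lemma nm_unitr (x : R) : x \is a GRing.unit -> ~ in_m x.
Proof. by move=> Hx /negP. Qed.

Lemma unitrDm (a x : R) : a \is a GRing.unit -> in_m x -> a + x \is a GRing.unit.
Proof.
move=> Ha Hx; apply: unitr_nm => H; apply: (nm_unitr Ha).
by have := mD H (mN Hx); rewrite addrK.
Qed.

Lemma unitr_1Bm (x : R) : in_m (1 - x) -> x \is a GRing.unit.
Proof. by move=> H; rewrite -[x](subKr 1); apply: unitrDm (unitr1 _) (mN H). Qed.

Lemma unitrM_local (x y : R) :
  x * y \is a GRing.unit -> x \is a GRing.unit /\ y \is a GRing.unit.
Proof.
move=> /nm_unitr Hxy; split; apply: unitr_nm => Hm; apply: Hxy.
- exact: mMr.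
- exact: mMl.
Qed.

Lemma mpow_0 k : mpow k (0 : R).
Proof. by case: k => [|k]; [apply: mpow0 | apply: mpow_zero]. Qed.

Lemma mpowD k (x y : R) : mpow k x -> mpow k y -> mpow k (x + y).
Proof. by case: k => [|k] Hx Hy; [apply: mpow0 | apply: mpow_add]. Qed.

Lemma mpowMl k (r x : R) : mpow k x -> mpow k (r * x).
Proof.
elim=> {k x} [x|n|n a b Ha Hb _|n x y _ IHx _ IHy].
- exact: mpow0.
- by rewrite mulr0; apply: mpow_zero.
- by rewrite mulrA; apply: mpow_mul Hb; apply: mMl.
- by rewrite mulrDr; apply: mpowD.
Qed.

Lemma mpowN k (x : R) : mpow k x -> mpow k (- x).
Proof. by rewrite -mulN1r; apply: mpowMl. Qed.

Lemma mpowB k (x y : R) : mpow k x -> mpow k y -> mpow k (x - y).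
Proof. by move=> Hx /mpowN; apply: mpowD. Qed.

Lemma mpowB_trans k (x y z : R) : mpow k (x - z) -> mpow k (y - z) -> mpow k (x - y).
Proof. by move=> Hx Hy; have := mpowB Hx Hy; rewrite opprB subrKA. Qed.

Lemma mpowM a b (x y : R) : mpow a x -> mpow b y -> mpow (a + b) (x * y).
Proof.
move=> Hx Hy; elim: Hx => {a x} [x|n|n a c Ha _ IH|n x z _ IHx _ IHz].
- exact: mpowMl.
- by rewrite mul0r; apply: mpow_0.
- by rewrite -mulrA addSn; apply: mpow_mul.
- by rewrite mulrDl; apply: mpowD.
Qed.

Lemma mpowW j k (x : R) : (j <= k)%N -> mpow k x -> mpow j x.
Proof.
move=> + Hx; elim: Hx j => {k x} [x|n|n a c Ha _ IH|n x z _ IHx _ IHz] [|j] Hj //;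
  try exact: mpow0.
- exact: mpow_zero.
- by apply: mpow_mul => //; apply: IH.
- by apply: mpow_add; [apply: IHx | apply: IHz].
Qed.

Lemma mpow1P (x : R) : mpow 1 x <-> in_m x.
Proof.
split; last by move=> Hx; rewrite -(mulr1 x); apply: mpow_mul; last exact: mpow0.
have Hpos k : mpow k x -> (0 < k)%N -> in_m x.
  elim=> {k x} [x|n|n a c Ha _ _|n x z _ IHx _ IHz] // _.
  - exact: m0.
  - exact: mMr.
  - by apply: mD; [apply: IHx | apply: IHz].
by move/Hpos; apply.
Qed.

Lemma mpow_sum k (I : finType) (F : I -> R) :
  (forall i, mpow k (F i)) -> mpow k (\sum_i F i).
Proof. by move=> H; apply: (big_ind (mpow k)) => //; [exact: mpow_0 | exact: mpowD]. Qed.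

Lemma mpow_sum_nat k (a : nat -> R) i j :
  (forall t, (i <= t)%N -> mpow k (a t)) -> mpow k (\sum_(i <= t < j) a t).
Proof.
move=> H; rewrite big_nat_cond; apply: (big_ind (mpow k)); [exact: mpow_0 | exact: mpowD |].
by move=> t /andP[/andP[Ht _] _]; apply: H.
Qed.

Lemma madic_lim_unique (u : nat -> R) l l' : madic_lim u l -> madic_lim u l' -> l = l'.
Proof.
move=> H H'; apply/eqP; rewrite -subr_eq0; apply/eqP/Hsep => k.
case: (H k) => N HN; case: (H' k) => N' HN'.
by apply: (mpowB_trans (z := u (maxn N N'))); rewrite -opprB; apply: mpowN;
  [apply: HN | apply: HN']; rewrite ?leq_maxl ?leq_maxr.
Qed.

Lemma madic_lim_cst (c : R) : madic_lim (fun _ => c) c.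
Proof. by move=> k; exists 0%N => i _; rewrite subrr; apply: mpow_0. Qed.

Lemma madic_limD (u v : nat -> R) l l' : madic_lim u l -> madic_lim v l' ->
  madic_lim (fun i => u i + v i) (l + l').
Proof.
move=> H H' k; case: (H k) => N HN; case: (H' k) => N' HN'.
exists (maxn N N') => i; rewrite geq_max => /andP[Hi Hi'].
by rewrite opprD addrACA; apply: mpowD; [apply: HN | apply: HN'].
Qed.

Lemma madic_lim_map (g : R -> R) (u : nat -> R) l :
  (forall x y, g (x - y) = g x - g y) -> (forall k x, mpow k x -> mpow k (g x)) ->
  madic_lim u l -> madic_lim (fun i => g (u i)) (g l).
Proof.
move=> gB gk H k; case: (H k) => N HN; exists N => i Hi.
by rewrite -gB; apply/gk/HN.
Qed.

Lemma madic_limN (u : nat -> R) l : madic_lim u l -> madic_lim (fun i => - u i) (- l).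
Proof. by apply: madic_lim_map => [x y|k x]; [rewrite opprB opprK addrC | apply: mpowN]. Qed.

Lemma madic_limB (u v : nat -> R) l l' : madic_lim u l -> madic_lim v l' ->
  madic_lim (fun i => u i - v i) (l - l').
Proof. by move=> H /madic_limN; apply: madic_limD. Qed.

Lemma madic_limMl (c : R) (u : nat -> R) l :
  madic_lim u l -> madic_lim (fun i => c * u i) (c * l).
Proof. by apply: madic_lim_map => [x y|k x]; [rewrite mulrBr | apply: mpowMl]. Qed.

Lemma madic_lim_near (u v : nat -> R) l : madic_lim u l ->
  (forall k, exists N, forall i, (N <= i)%N -> mpow k (v i - u i)) -> madic_lim v l.
Proof.
move=> H H' k; case: (H k) => N HN; case: (H' k) => N' HN'.
exists (maxn N N') => i; rewrite geq_max => /andP[Hi Hi'].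
by rewrite -(subrKA (u i)); apply: mpowD; [apply: HN' | apply: HN].
Qed.

Lemma madic_lim_eq (u v : nat -> R) l : madic_lim u l ->
  (exists N, forall i, (N <= i)%N -> v i = u i) -> madic_lim v l.
Proof.
move=> H [N HN]; apply: (madic_lim_near H) => k; exists N => i Hi.
by rewrite HN // subrr; apply: mpow_0.
Qed.

Lemma madic_lim_unshift (u : nat -> R) l :
  madic_lim (fun i => u i.+1) l -> madic_lim u l.
Proof. by move=> H k; case: (H k) => N HN; exists N.+1 => [[|i]] // Hi; apply: HN. Qed.

Lemma madic_lim_mpow (u : nat -> R) l k : madic_lim u l ->
  (exists N, forall i, (N <= i)%N -> mpow k (u i)) -> mpow k l.
Proof.
move=> H [N HN]; case: (H k) => N' HN'.
rewrite -[l](subKr (u (maxn N N'))).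
by apply: mpowB; [apply: HN | apply: HN']; rewrite ?leq_maxl ?leq_maxr.
Qed.

Lemma sum_ord_sub (a : nat -> R) i j : (i <= j)%N ->
  \sum_(t < j) a t - \sum_(t < i) a t = \sum_(i <= t < j) a t.
Proof.
by move=> Hij; rewrite -!(big_mkord xpredT) (big_cat_nat (leq0n i) Hij) /= addrAC subrr add0r.
Qed.

Lemma madic_series_tail (a : nat -> R) l N k :
  madic_lim (fun M => \sum_(t < M) a t) l ->
  (forall t, (N <= t)%N -> mpow k (a t)) -> mpow k (l - \sum_(t < N) a t).
Proof.
move=> H Ha; apply: (madic_lim_mpow (madic_limB H (madic_lim_cst _))).
by exists N => M HM; rewrite sum_ord_sub //; apply: mpow_sum_nat.
Qed.

Lemma madic_series_cvg (a : nat -> R) c : (forall t, mpow (t - c) (a t)) ->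
  exists l, madic_lim (fun M => \sum_(t < M) a t) l.
Proof.
move=> Ha; apply: Hcomp => k; exists (k + c)%N.
suff key i j : (k + c <= i <= j)%N -> mpow k (\sum_(t < j) a t - \sum_(t < i) a t).
  move=> i j Hi Hj; case: (leqP i j) => Hij.
  - by rewrite -opprB; apply/mpowN/key; rewrite Hi.
  - by apply: key; rewrite Hj ltnW.
case/andP=> Hi Hij; rewrite sum_ord_sub //.
by apply: mpow_sum_nat => t Ht; apply: (mpowW _ (Ha t)); lia.
Qed.

Variable sigma : {rmorphism R -> R}.
Variable delta : R -> R.
Hypothesis sigma_m : forall x, in_m x -> in_m (sigma x).
Hypothesis Hdelta : sigma_derivation sigma delta.
Hypothesis delta_m : forall x, in_m (delta x).
Hypothesis delta_m2 : forall x, in_m x -> mpow 2 (delta x).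

Lemma deltaD x y : delta (x + y) = delta x + delta y.
Proof. by case: Hdelta. Qed.

Lemma deltaM x y : delta (x * y) = delta x * y + sigma x * delta y.
Proof. by case: Hdelta. Qed.

Lemma delta0 : delta 0 = 0.
Proof. by apply/eqP; rewrite -(addrK (delta 0) (delta 0)) -deltaD addr0 subrr. Qed.

Lemma deltaB x y : delta (x - y) = delta x - delta y.
Proof. by apply/eqP; rewrite eq_sym subr_eq -deltaD subrK. Qed.

Lemma delta_sum (I : Type) (r : seq I) (P : pred I) (F : I -> R) :
  delta (\sum_(i <- r | P i) F i) = \sum_(i <- r | P i) delta (F i).
Proof. exact: (big_morph delta deltaD delta0). Qed.

Lemma delta1 : delta 1 = 0.
Proof.
by have /eqP := deltaM 1 1; rewrite !mulr1 rmorph1 mul1r -subr_eq subrr eq_sym => /eqP.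
Qed.

Lemma mpow_sigma k x : mpow k x -> mpow k (sigma x).
Proof.
elim=> {k x} [x|n|n a b Ha _ IH|n x y _ IHx _ IHy].
- exact: mpow0.
- by rewrite rmorph0; apply: mpow_zero.
- by rewrite rmorphM; apply: mpow_mul => //; apply: sigma_m.
- by rewrite rmorphD; apply: mpow_add.
Qed.

Lemma mpow_delta k x : mpow k x -> mpow k.+1 (delta x).
Proof.
elim=> {k x} [x|n|n a b Ha Hb IH|n x y _ IHx _ IHy].
- exact/mpow1P.
- by rewrite delta0; apply: mpow_zero.
- rewrite deltaM; apply: mpow_add; first exact: mpowM (delta_m2 Ha) Hb.
  by apply: mpow_mul => //; apply: sigma_m.
- by rewrite deltaD; apply: mpow_add.
Qed.

Lemma mpow_deltaW k x : mpow k x -> mpow k (delta x).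
Proof. by move/mpow_delta; apply: mpowW. Qed.

Definition mulX (g : series R) : series R :=
  fun n => (if n is n'.+1 then sigma (g n') else 0) + delta (g n).

Definition mulXn i g := iter i mulX g.

Lemma mulXn_xc i (g : series R) n :
  mulXn i g n = \sum_(j < n.+1) xc sigma delta i (n - j) (g j).
Proof.
elim: i n => [|i IH] n /=.
  rewrite big_ord_recr /= subnn eqxx big1 ?add0r // => j _.
  by rewrite subn_eq0 leqNgt ltn_ord.
rewrite /mulXn /= -/(mulXn i g) /mulX big_split /= IH delta_sum; congr (_ + _).
case: n => [|n]; first by rewrite big_ord_recr big_ord0 /= add0r.
rewrite big_ord_recr /= subnn addr0 IH rmorph_sum.
by apply: eq_bigr => j _; rewrite subSn // -ltnS.
Qed.

Lemma mul_partialE (f g : series R) n N :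
  mul_partial sigma delta f g n N = \sum_(i < N) f i * mulXn i g n.
Proof. by apply: eq_bigr => i _; rewrite mulXn_xc mulr_sumr. Qed.

(* The [a]-th step of the [(m, X)]-adic filtration. *)
Definition mXpow (a : nat) (g : series R) := forall n, mpow (a - n) (g n).
Definition mpow_coefs (a : nat) (g : series R) := forall n, mpow a (g n).

Lemma mXpow0 g : mXpow 0 g.
Proof. by move=> n; apply: mpow0. Qed.

Lemma mpow_coefs0 g : mpow_coefs 0 g.
Proof. by move=> n; apply: mpow0. Qed.

Lemma mXpow_mulX a g : mXpow a g -> mXpow a.+1 (mulX g).
Proof.
move=> H [|n]; rewrite /mulX.
  by rewrite add0r; apply: (mpowW _ (mpow_delta (H 0%N))); lia.
apply: mpowD; first by apply: mpow_sigma; rewrite subSS; apply: H.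
by apply: (mpowW _ (mpow_delta (H n.+1))); lia.
Qed.

Lemma mXpow_mulXn a i g : mXpow a g -> mXpow (a + i) (mulXn i g).
Proof. by move=> H; elim: i => [|i IH]; rewrite ?addn0 // addnS; apply: mXpow_mulX. Qed.

Lemma mpow_coefs_mulXn a i g : mpow_coefs a g -> mpow_coefs a (mulXn i g).
Proof.
move=> H; elim: i => [|i IH] //= [|n]; rewrite /mulX.
  by rewrite add0r; apply/mpow_deltaW/IH.
by apply: mpowD; [apply/mpow_sigma/IH | apply/mpow_deltaW/IH].
Qed.

Definition sadd (f g : series R) : series R := fun n => f n + g n.
Definition ssub (f g : series R) : series R := fun n => f n - g n.

Lemma mulXnD i f g n : mulXn i (sadd f g) n = mulXn i f n + mulXn i g n.
Proof.
elim: i n => [|i IH] n //=; rewrite /mulX !IH.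
by case: n => [|n]; rewrite ?add0r ?IH ?rmorphD deltaD // addrACA.
Qed.

Lemma mulXnB i f g n : mulXn i (ssub f g) n = mulXn i f n - mulXn i g n.
Proof.
elim: i n => [|i IH] n //=; rewrite /mulX !IH.
by case: n => [|n]; rewrite ?add0r ?IH ?rmorphB deltaB // opprD addrACA.
Qed.

Lemma term_mXpow (f g : series R) n i : mpow (i - n) (f i * mulXn i g n).
Proof. by apply: mpowMl; have := mXpow_mulXn i (mXpow0 g) n. Qed.

Lemma smul_cvg (f g : series R) n :
  exists l, madic_lim (fun N => \sum_(i < N) f i * mulXn i g n) l.
Proof.
by apply: (madic_series_cvg (a := fun i => f i * mulXn i g n) (c := n)) => t;
  apply: term_mXpow.
Qed.

Definition smul (f g : series R) : series R :=
  fun n => proj1_sig (constructive_indefinite_description _ (smul_cvg f g n)).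

Lemma smulP (f g : series R) n :
  madic_lim (fun N => \sum_(i < N) f i * mulXn i g n) (smul f g n).
Proof. exact: (proj2_sig (constructive_indefinite_description _ (smul_cvg f g n))). Qed.

Lemma smul_lim (f g h : series R) :
  (forall n, madic_lim (fun N => \sum_(i < N) f i * mulXn i g n) (h n)) -> smul f g = h.
Proof.
by move=> H; apply: functional_extensionality => n; apply: madic_lim_unique (smulP f g n) (H n).
Qed.

Lemma series_mul_eqP (f g h : series R) : series_mul_eq sigma delta f g h <-> h = smul f g.
Proof.
have E n : mul_partial sigma delta f g n = fun N => \sum_(i < N) f i * mulXn i g n.
  by apply: functional_extensionality => N; apply: mul_partialE.
split=> [H | -> n]; last by rewrite E; apply: smulP.
by symmetry; apply: smul_lim => n; rewrite -E.
Qed.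

Lemma smul_mXpow a b (f g : series R) : mXpow a f -> mXpow b g -> mXpow (a + b) (smul f g).
Proof.
move=> Hf Hg n; apply: (madic_lim_mpow (smulP f g n)); exists 0%N => N _.
apply: mpow_sum => i; apply: (mpowW _ (mpowM (Hf i) (mXpow_mulXn i Hg n))); lia.
Qed.

Lemma smul_mpow_coefs a b (f g : series R) :
  mpow_coefs a f -> mpow_coefs b g -> mpow_coefs (a + b) (smul f g).
Proof.
move=> Hf Hg n; apply: (madic_lim_mpow (smulP f g n)); exists 0%N => N _.
by apply: mpow_sum => i; apply: mpowM; [apply: Hf | apply: mpow_coefs_mulXn].
Qed.

Lemma smulDl (f f' g : series R) : smul (sadd f f') g = sadd (smul f g) (smul f' g).
Proof.
apply: smul_lim => n; apply: (madic_lim_eq (madic_limD (smulP f g n) (smulP f' g n))).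
by exists 0%N => N _; rewrite -big_split; apply: eq_bigr => i _; rewrite mulrDl.
Qed.

Lemma smulBl (f f' g : series R) : smul (ssub f f') g = ssub (smul f g) (smul f' g).
Proof.
apply: smul_lim => n; apply: (madic_lim_eq (madic_limB (smulP f g n) (smulP f' g n))).
by exists 0%N => N _; rewrite -sumrB; apply: eq_bigr => i _; rewrite mulrBl.
Qed.

Lemma smulDr (f g g' : series R) : smul f (sadd g g') = sadd (smul f g) (smul f g').
Proof.
apply: smul_lim => n; apply: (madic_lim_eq (madic_limD (smulP f g n) (smulP f g' n))).
by exists 0%N => N _; rewrite -big_split; apply: eq_bigr => i _; rewrite mulXnD mulrDr.
Qed.

Lemma smulBr (f g g' : series R) : smul f (ssub g g') = ssub (smul f g) (smul f g').
Proof.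
apply: smul_lim => n; apply: (madic_lim_eq (madic_limB (smulP f g n) (smulP f g' n))).
by exists 0%N => N _; rewrite -sumrB; apply: eq_bigr => i _; rewrite mulXnB mulrBr.
Qed.

Definition cst (c : R) : series R := fun n => if n == 0%N then c else 0.

Lemma smul_cstl c (g : series R) : smul (cst c) g = fun n => c * g n.
Proof.
apply: smul_lim => n; apply: (madic_lim_eq (madic_lim_cst _)); exists 1%N => [[|N]] // _.
by rewrite big_ord_recl /= big1 ?addr0 // => i _; rewrite mul0r.
Qed.

Lemma smul_scalel c (f g : series R) : smul (fun n => c * f n) g = fun n => c * smul f g n.
Proof.
apply: smul_lim => n; apply: (madic_lim_eq (madic_limMl c (smulP f g n))).
by exists 0%N => N _; rewrite mulr_sumr; apply: eq_bigr => i _; rewrite mulrA.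
Qed.

Lemma smul0l (h : series R) : smul (fun _ => 0) h = fun _ => 0.
Proof.
apply: smul_lim => n; apply: (madic_lim_eq (madic_lim_cst 0)); exists 0%N => N _.
by rewrite big1 // => i _; rewrite mul0r.
Qed.

Definition Xpow (s : nat) : series R := fun n => if n == s then 1 else 0.

Lemma mulXn_Xpow i s : mulXn i (Xpow s) = Xpow (i + s).
Proof.
elim: i => [|i IH] //=; rewrite IH; apply: functional_extensionality => n.
rewrite /mulX /Xpow (fun_if delta) delta1 delta0 if_same addr0.
by case: n => [|n] //; rewrite eqSS (fun_if sigma) rmorph1 rmorph0.
Qed.

Lemma smul_Xpowr (f : series R) s :
  smul f (Xpow s) = fun n => if (s <= n)%N then f (n - s)%N else 0.
Proof.
apply: smul_lim => n; apply: (madic_lim_eq (madic_lim_cst _)); exists n.+1 => N HN /=.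
under eq_bigr => i _ do rewrite mulXn_Xpow /Xpow (fun_if (GRing.mul (f i))) mulr1 mulr0.
case: leqP => Hsn; last by rewrite big1 // => i _; case: eqP => //; lia.
have Hlt : (n - s < N)%N by lia.
rewrite (bigD1 (Ordinal Hlt)) //= ifT; last by apply/eqP; lia.
rewrite big1 ?addr0 // => i /eqP Hi; case: eqP => // Hn.
by case: Hi; apply: val_inj => /=; lia.
Qed.

Lemma smul1r (f : series R) : smul f (one_series R) = f.
Proof.
rewrite [one_series R]/(Xpow 0) smul_Xpowr.
by apply: functional_extensionality => n; rewrite subn0.
Qed.

Lemma smul1l (g : series R) : smul (one_series R) g = g.
Proof.
rewrite [one_series R]/(cst 1) smul_cstl.
by apply: functional_extensionality => n; rewrite mul1r.
Qed.

Lemma sum_mulXl_recr (g h : series R) n N :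
  \sum_(i < N.+1) mulX g i * mulXn i h n =
  \sum_(i < N) (sigma (g i) * mulXn i.+1 h n + delta (g i) * mulXn i h n)
  + delta (g N) * mulXn N h n.
Proof.
rewrite /mulX; under eq_bigr => i _ do rewrite mulrDl.
rewrite big_split /= big_ord_recl /= mul0r add0r big_ord_recr /=.
by rewrite big_split /= addrA.
Qed.

Lemma smul_mulXl (g h : series R) : smul (mulX g) h = mulX (smul g h).
Proof.
apply: smul_lim => n; apply: madic_lim_unshift.
have Hsigma : madic_lim (fun N => \sum_(i < N) sigma (g i) *
                 (if n is n'.+1 then sigma (mulXn i h n') else 0))
              (if n is n'.+1 then sigma (smul g h n') else 0).
  case: n => [|n].
    apply: (madic_lim_eq (madic_lim_cst 0)); exists 0%N => N _.
    by rewrite big1 // => i _; rewrite mulr0.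
  apply: (madic_lim_eq (madic_lim_map (rmorphB sigma) mpow_sigma (smulP g h n))).
  by exists 0%N => N _; rewrite rmorph_sum; apply: eq_bigr => i _; rewrite rmorphM.
pose Q N := \sum_(i < N) (sigma (g i) * mulXn i.+1 h n + delta (g i) * mulXn i h n).
have HQ : madic_lim Q (mulX (smul g h) n).
  apply: (madic_lim_eq (madic_limD Hsigma (madic_lim_map deltaB mpow_deltaW (smulP g h n)))).
  exists 0%N => N _; rewrite /Q delta_sum -big_split; apply: eq_bigr => i _ /=.
  by rewrite deltaM /mulX mulrDr -addrA [delta _ * _ + _]addrC.
apply: (madic_lim_near HQ) => k; exists (k + n)%N => N HN.
rewrite sum_mulXl_recr addrC addKr.
by apply: mpowMl; apply: (mpowW _ (mXpow_mulXn N (mXpow0 h) n)); lia.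
Qed.

Lemma smul_mulXnl i (g h : series R) : smul (mulXn i g) h = mulXn i (smul g h).
Proof. by elim: i => [|i IH] //=; rewrite smul_mulXl IH. Qed.

Lemma smul_psuml (f g h : series R) N :
  smul (fun n => \sum_(i < N) f i * mulXn i g n) h =
  fun n => \sum_(i < N) f i * mulXn i (smul g h) n.
Proof.
elim: N => [|N IH].
  have E (g' : series R) : (fun n => \sum_(i < 0) f i * mulXn i g' n) = (fun _ => 0).
    by apply: functional_extensionality => n; rewrite big_ord0.
  by rewrite !E smul0l.
have -> : (fun n => \sum_(i < N.+1) f i * mulXn i g n) =
          sadd (fun n => \sum_(i < N) f i * mulXn i g n) (fun n => f N * mulXn N g n).
  by apply: functional_extensionality => n; rewrite big_ord_recr.
rewrite smulDl IH smul_scalel smul_mulXnl.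
by apply: functional_extensionality => n; rewrite big_ord_recr.
Qed.

(* Both sides agree, up to [m^k] in degree [n], with [\sum_(i < k + n) f_i X^i (g h)]. *)
Lemma smulA (f g h : series R) : smul (smul f g) h = smul f (smul g h).
Proof.
apply: functional_extensionality => n; apply/eqP; rewrite -subr_eq0; apply/eqP.
apply: Hsep => k; pose N := (k + n)%N.
pose G n := \sum_(i < N) f i * mulXn i g n.
pose S := \sum_(i < N) f i * mulXn i (smul g h) n.
have HA : mpow k (smul (smul f g) h n - S).
  have HG : mXpow N (ssub (smul f g) G).
    move=> m; apply: (madic_series_tail (a := fun i => f i * mulXn i g m) (smulP f g m)) => t Ht.
    by apply: (mpowW _ (term_mXpow f g m t)); lia.
  have := smul_mXpow HG (mXpow0 h) n; rewrite smulBl smul_psuml addn0.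
  by apply: mpowW; lia.
have HB : mpow k (smul f (smul g h) n - S).
  apply: (madic_series_tail (a := fun i => f i * mulXn i (smul g h) n) (smulP _ _ n)) => t Ht.
  by apply: (mpowW _ (term_mXpow f _ n t)); lia.
exact: mpowB_trans HA HB.
Qed.

Section Contraction.
Variable w : nat -> nat -> nat.
Variable T : series R -> series R.
Hypothesis w0 : forall n, w 0%N n = 0%N.
Hypothesis wS : forall k n, (w k n <= w k.+1 n)%N.
Hypothesis w_ge : forall k n, (k - n <= w k n)%N.
Hypothesis T_contr : forall k (z z' : series R), (forall n, mpow (w k n) (z n - z' n)) ->
  forall n, mpow (w k.+1 n) (T z n - T z' n).

Let zs k := iter k T (fun _ => 0).

Let zs_cauchy k d n : mpow (w k n) (zs (k + d)%N n - zs k n).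
Proof.
have step j m : mpow (w j m) (zs j.+1 m - zs j m).
  by elim: j m => [|j IH] m; [rewrite w0; apply: mpow0 | apply: T_contr].
have w_mono j : (w k n <= w (k + j) n)%N.
  by elim: j => [|j IH]; rewrite ?addn0 // addnS (leq_trans IH (wS _ _)).
elim: d => [|d IH]; first by rewrite addn0 subrr; apply: mpow_0.
rewrite addnS -(subrKA (zs (k + d)%N n)); apply: mpowD (mpowW (w_mono d) (step _ n)) IH.
Qed.

Lemma contraction_fixpoint : exists z, T z = z.
Proof.
have zs_far K n i : (K + n <= i)%N -> mpow K (zs i n - zs (K + n)%N n).
  move=> Hi; rewrite -(subnKC Hi); apply: mpowW (zs_cauchy _ _ n).
  by rewrite (leq_trans _ (w_ge _ n)) // addnK.
have [z Hz] : exists z : series R, forall n, madic_lim (fun k => zs k n) (z n).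
  apply: (choice (fun n l => madic_lim (fun k => zs k n) l)) => n.
  apply: Hcomp => K; exists (K + n)%N => i j Hi Hj.
  by apply: mpowB_trans; apply: zs_far.
have z_close k n : mpow (w k n) (z n - zs k n).
  apply: (madic_lim_mpow (madic_limB (Hz n) (madic_lim_cst (zs k n)))).
  by exists k => j Hj; rewrite -(subnKC Hj); apply: zs_cauchy.
exists z; apply: functional_extensionality => n; apply/eqP; rewrite -subr_eq0; apply/eqP.
apply: Hsep => K; have HK := leq_trans _ (w_ge (K + n).+1 n).
apply: (mpowB_trans (z := zs (K + n).+1 n)).
- by apply: mpowW (T_contr (z_close (K + n)%N) n); apply: HK; lia.
- by apply: mpowW (z_close _ n); apply: HK; lia.
Qed.

End Contraction.

Definition drop_const (u : series R) : series R := fun n => if n == 0%N then 0 else u n.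

Lemma smul_const_split (u g : series R) :
  smul u g = sadd (fun n => u 0%N * g n) (smul (drop_const u) g).
Proof.
have uE : u = sadd (cst (u 0%N)) (drop_const u).
  by apply: functional_extensionality => -[|n]; rewrite /sadd /cst /drop_const ?addr0 ?add0r.
by rewrite {1}uE smulDl smul_cstl.
Qed.

Lemma mXpow_drop_const u : mXpow 1 (drop_const u).
Proof. by move=> [|n]; [apply: mpow_0 | apply: mpow0]. Qed.

Lemma smul_coef0 (f g : series R) : in_m (smul f g 0%N - f 0%N * g 0%N).
Proof.
rewrite smul_const_split /sadd addrC addKr.
by apply/mpow1P; exact: (smul_mXpow (mXpow_drop_const f) (mXpow0 g) 0%N).
Qed.

Lemma smul_one_coef0 (u v : series R) :
  smul u v = one_series R -> u 0%N \is a GRing.unit /\ v 0%N \is a GRing.unit.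
Proof.
move=> Huv; apply/unitrM_local/unitr_1Bm.
by have := smul_coef0 u v; rewrite Huv.
Qed.

(* The right inverse solves [g = u_0^-1 (1 - (u - u_0) g)], a contraction for [mXpow]. *)
Lemma smul_rinv (u : series R) : u 0%N \is a GRing.unit -> exists g, smul u g = one_series R.
Proof.
move=> Hu; pose T (g : series R) n := (u 0%N)^-1 * (one_series R n - smul (drop_const u) g n).
have [g Hg] : exists g, T g = g.
  apply: (@contraction_fixpoint (fun k n => k - n)%N) => // [k n|k z z' Hzz' n]; first lia.
  rewrite /T -mulrBr; apply: mpowMl; rewrite opprB addrC subrKA -opprB; apply: mpowN.
  by have := smul_mXpow (mXpow_drop_const u) (Hzz' : mXpow k (ssub z z')) n; rewrite smulBr.
exists g; rewrite smul_const_split; apply: functional_extensionality => n.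
by rewrite /sadd -{1}Hg /T mulrA mulrV // mul1r subrK.
Qed.

Definition sunit (u : series R) :=
  exists v, smul u v = one_series R /\ smul v u = one_series R.

Lemma series_unitP u : series_unit sigma delta u <-> sunit u.
Proof.
split=> -[v [H1 H2]]; exists v.
- by split; symmetry; apply/series_mul_eqP.
- by split; apply/series_mul_eqP; symmetry.
Qed.

Lemma sunit_coef0 u : sunit u -> u 0%N \is a GRing.unit.
Proof. by case=> v [/smul_one_coef0 []]. Qed.

Lemma coef0_sunit (u : series R) : u 0%N \is a GRing.unit -> sunit u.
Proof.
move=> Hu; have [g Hg] := smul_rinv Hu.
have [h Hh] := smul_rinv (smul_one_coef0 Hg).2.
have Euh : u = h by rewrite -[LHS]smul1r -Hh -smulA Hg smul1l.
by exists g; split => //; rewrite Euh.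
Qed.

Lemma sunitM (u v : series R) : sunit u -> sunit v -> sunit (smul u v).
Proof.
move=> [u' [Hu Hu']] [v' [Hv Hv']]; exists (smul v' u'); split.
- by rewrite smulA -(smulA v) Hv smul1l.
- by rewrite smulA -(smulA u') Hu' smul1l.
Qed.

Lemma red_ord_decomp (f : series R) : finite_red_ord f ->
  exists s U V, [/\ mpow_coefs 1 U, V 0%N \is a GRing.unit & f = sadd U (smul V (Xpow s))].
Proof.
move=> Hf; case: (ex_minnP Hf) => s Hs Hmin.
exists s, (fun n => if (n < s)%N then f n else 0), (fun n => f (n + s)%N); split => //.
- move=> n; apply/mpow1P; case: ltnP => Hn; last exact: m0.
  by apply/negP => /Hmin; lia.
- apply: functional_extensionality => n; rewrite smul_Xpowr /sadd.
  by case: ltnP => Hn; rewrite ?addr0 // add0r subnK.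
Qed.

(* [w = 1 + z] with [z_n = -(h + z h)_(n+s)] kills the coefficients of [w (X^s + h)] above [X^s]. *)
Lemma Xpow_add_distinguished (h : series R) s : mpow_coefs 1 h ->
  exists w, sunit w /\ distinguished (smul w (sadd (Xpow s) h)).
Proof.
move=> Hh; pose T (z : series R) n := - (h (n + s)%N + smul z h (n + s)%N).
have [z Hz] : exists z, T z = z.
  apply: (@contraction_fixpoint (fun k _ => k)) => // [k n|k z z' Hzz' n]; first exact: leq_subr.
  rewrite /T opprK addrC [h (n + s)%N + _]addrC addrKA -opprB; apply: mpowN.
  by have := smul_mpow_coefs (Hzz' : mpow_coefs k (ssub z z')) Hh (n + s)%N; rewrite smulBl addn1.
have zh_m n : in_m (h n + smul z h n).
  by apply: mD; apply/mpow1P; [apply: Hh | exact: (smul_mpow_coefs (mpow_coefs0 z) Hh)].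
exists (sadd (one_series R) z); split.
  apply: coef0_sunit; apply: unitrDm (unitr1 _) _.
  by rewrite -Hz; apply/mN/zh_m.
have FE n : smul (sadd (one_series R) z) (sadd (Xpow s) h) n =
            Xpow s n + (h n + smul z h n) + smul z (Xpow s) n.
  by rewrite smulDl smul1l smulDr /sadd [smul z _ n + _]addrC -!addrA.
exists s; split; [|split] => [|i Hi|i Hi]; rewrite FE smul_Xpowr.
- by rewrite leqnn subnn -{2}Hz /T add0n /Xpow eqxx addrK.
- by rewrite leqNgt Hi /Xpow (ltn_eqF Hi) add0r addr0; apply: zh_m.
- by rewrite (ltnW Hi) -{2}Hz /T subnK ?(ltnW Hi) // /Xpow (gtn_eqF Hi) add0r subrr.
Qed.

Lemma weierstrass_existence (f : series R) : finite_red_ord f ->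
  exists eps F, [/\ sunit eps, distinguished F & smul eps F = f].
Proof.
case/red_ord_decomp => s [U [V [HU /coef0_sunit HV Hf]]].
have [V' [HVV' HV'V]] := HV.
have [w [Hw HF]] := Xpow_add_distinguished s (smul_mpow_coefs (mpow_coefs0 V') HU).
have [w' [Hww' Hw'w]] := Hw.
exists (smul V w'), (smul w (sadd (Xpow s) (smul V' U))); split => //.
  by apply: sunitM => //; exists w.
rewrite smulA -(smulA w') Hw'w smul1l smulDr -smulA HVV' smul1l Hf.
by apply: functional_extensionality => n; rewrite /sadd addrC.
Qed.

Lemma mpow_coefs_sub_Xpow (F : series R) s : F s = 1 ->
  (forall i, (i < s)%N -> in_m (F i)) -> (forall i, (s < i)%N -> F i = 0) ->
  mpow_coefs 1 (ssub F (Xpow s)).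
Proof.
move=> Fs Flt Fgt n; apply/mpow1P; rewrite /ssub /Xpow.
by case: (ltngtP n s) => [/Flt|/Fgt->|->]; rewrite ?eqxx ?subr0 ?Fs ?subrr //; exact: m0.
Qed.

Lemma distinguished_unit_mul_deg (u F' H : series R) s s' :
  u 0%N \is a GRing.unit -> mpow_coefs 1 H ->
  F' s' = 1 -> (forall i, (i < s')%N -> in_m (F' i)) ->
  smul u (sadd (Xpow s) H) = F' -> s = s'.
Proof.
move=> Hu HH F's F'lt HuF.
have uH1 := smul_mpow_coefs (mpow_coefs0 u) HH.
have F'E n : F' n = (if (s <= n)%N then u (n - s)%N else 0) + smul u H n.
  by rewrite -HuF smulDr smul_Xpowr.
case: (ltngtP s s') => // Hlt; exfalso.
- apply: (nm_unitr Hu); have := mD (F'lt _ Hlt) (mN ((mpow1P _).1 (uH1 s))).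
  by rewrite F'E leqnn subnn addrK.
- by apply: (nm_unitr (unitr1 R)); rewrite -F's F'E leqNgt Hlt add0r; apply/mpow1P.
Qed.

Lemma distinguished_unit_mul (u F F' : series R) : u 0%N \is a GRing.unit ->
  distinguished F -> distinguished F' -> smul u F = F' -> u = one_series R /\ F = F'.
Proof.
move=> Hu [s [Fs [Flt Fgt]]] [s' [F's [F'lt F'gt]]] HuF.
have HH := mpow_coefs_sub_Xpow Fs Flt Fgt.
have EF : F = sadd (Xpow s) (ssub F (Xpow s)).
  by apply: functional_extensionality => n; rewrite /sadd /ssub addrC subrK.
have Ess' := distinguished_unit_mul_deg Hu HH F's F'lt (etrans (congr1 _ (esym EF)) HuF).
subst s'; suff Hu1 : u = one_series R by split => //; rewrite -HuF Hu1 smul1l.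
have Hw : smul (ssub u (one_series R)) F = ssub F' F by rewrite smulBl smul1l HuF.
have Hwk k : mpow_coefs k (ssub u (one_series R)).
  elim: k => [|k IH] i; first exact: mpow0.
  have := congr1 (fun g => g (i + s)%N) Hw; rewrite /= {1}EF smulDr /sadd smul_Xpowr.
  rewrite leq_addl addnK /ssub.
  have -> : F' (i + s)%N - F (i + s)%N = 0.
    case: i => [|i]; first by rewrite add0n Fs F's subrr.
    by rewrite Fgt ?F'gt ?subrr // addSn ltnS leq_addl.
  move/eqP; rewrite addr_eq0 => /eqP ->; apply: mpowN.
  by have := smul_mpow_coefs IH HH (i + s)%N; rewrite addn1.
apply: functional_extensionality => n; apply/eqP; rewrite -subr_eq0; apply/eqP.
by apply: Hsep => k; apply: Hwk.
Qed.

Lemma weierstrass_uniqueness (f eps F eps' F' : series R) :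
  sunit eps -> distinguished F -> smul eps F = f ->
  sunit eps' -> distinguished F' -> smul eps' F' = f ->
  eps = eps' /\ F = F'.
Proof.
move=> Heps HF Hf [nu' [H1' H2']] HF' Hf'.
have HuF : smul (smul nu' eps) F = F' by rewrite smulA Hf -Hf' -smulA H2' smul1l.
have Hu : sunit (smul nu' eps) by apply: sunitM => //; exists eps'.
have [Hu1 HFF] := distinguished_unit_mul (sunit_coef0 Hu) HF HF' HuF.
by split => //; rewrite -[RHS]smul1r -Hu1 -smulA H1' smul1l.
Qed.

End Weierstrass.

Theorem mainTheorem6 (R : unitRingType)
  (sigma : {rmorphism R -> R}) (delta : R -> R)
  (Hloc : local_ring R)
  (Hsep : madic_separated R)
  (Hcomp : madic_complete R)
  (Hsig_bij : bijective sigma)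
  (Hsig_m : (forall x, in_m x -> in_m (sigma x)) /\
            (forall y, in_m y -> exists x, in_m x /\ sigma x = y))
  (Hdelta : sigma_derivation sigma delta)
  (Hdelta_R : forall x, in_m (delta x))
  (Hdelta_m : forall x, in_m x -> mpow 2 (delta x))
  (f : series R) (Hf : finite_red_ord f) :
  (exists (eps F : series R),
      series_unit sigma delta eps /\ distinguished F /\
      series_mul_eq sigma delta eps F f) /\
  (forall (eps F eps' F' : series R),
      series_unit sigma delta eps -> distinguished F ->
      series_mul_eq sigma delta eps F f ->
      series_unit sigma delta eps' -> distinguished F' ->
      series_mul_eq sigma delta eps' F' f ->
      eps = eps' /\ F = F').
Proof.
have unitP := series_unitP Hloc Hsep Hcomp Hsig_m.1 Hdelta Hdelta_R Hdelta_m.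
have mulP := series_mul_eqP Hloc Hsep Hcomp Hsig_m.1 Hdelta Hdelta_R Hdelta_m.
split.
- have [eps [F [Heps HF Hmul]]] :=
    weierstrass_existence Hloc Hsep Hcomp Hsig_m.1 Hdelta Hdelta_R Hdelta_m Hf.
  by exists eps, F; split; [apply/unitP | split => //; apply/mulP].
- move=> eps F eps' F' /unitP Heps HF /mulP Hmul /unitP Heps' HF' /mulP Hmul'.
  exact: (weierstrass_uniqueness Hsep Heps HF (esym Hmul) Heps' HF' (esym Hmul')).
Qed.
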